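(* (Backward transformation compatible with substitutions.) If $\Delta;\Gamma,x{:}A\vdash M:B$ and $\Delta;\Gamma\vdash N:A$ in DCC, then $(M[N/x])^\circ=M^\circ[N^\circ/x]$.
   Context: DCC: expressions $x\mid U_i\mid\Pi x{:}A.B\mid L@M\mid\ell_i\{\overline M\}$ (label names $\ell_i$, lists $\overline M=M_1,\dots,M_n$); type contexts $\Gamma$; label contexts $\Delta::=\cdot\mid\Delta,\ell_i(\{\overline x{:}\overline A\},x{:}A\mapsto L:B)$; substitution standard with $\ell\{\overline M\}[N/x]=\ell\{\overline{M[N/x]}\}$; typing $\Delta;\Gamma\vdash M:A$ by the CC-style rules for variables, universes ($U_i:U_{i+1}$), $\Pi$, application $M@N:B[N/x]$ and conversion, plus: if $\Delta;\Gamma$ is well formed, $\ell(\{\overline x{:}\overline A\},x{:}A\mapsto M:B)\in\Delta$, $|\overline M|=|\overline x|$ and $\Delta;\Gamma\vdash M_k:A_k[M_1/x_1,\dots,M_{k-1}/x_{k-1}]$ for all $k$, then $\Delta;\Gamma\vdash\ell\{\overline M\}:\Pi x{:}A[\overline M/\overline x].B[\overline M/\overline x]$; well-formed label entries satisfy $\Delta;\overline x{:}\overline A,x{:}A\vdash L:B$. Backward transformation to CC (expressions $x\mid U_i\mid\Pi x{:}A.B\mid L\,M\mid\lambda x{:}A.M$), defined on well-typed DCC terms relative to $\Delta$: $x^\circ=x$, $U_i^\circ=U_i$, $(\Pi x{:}A.B)^\circ=\Pi x{:}A^\circ.B^\circ$, $(M@N)^\circ=M^\circ\,N^\circ$, and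 $(\ell\{\overline M\})^\circ=\lambda x{:}A^\circ[\overline{M^\circ}/\overline x].\,L^\circ[\overline{M^\circ}/\overline x]$ where $\ell(\{\overline x{:}\overline A\},x{:}A\mapsto L:B)\in\Delta$; it acts pointwise on type contexts. *)

From Stdlib Require Import List Arith Relations PeanoNat.
Import ListNotations.

(* var n : de Bruijn index; univ i : U_i; pi A B : Pi x:A.B (x bound in B);
   app M N : M @ N; lab l Ms : l{Ms}. *)
Inductive tm : Type :=
| var (n : nat)
| univ (i : nat)
| pi (A B : tm)
| app (M N : tm)
| lab (l : nat) (Ms : list tm).

Definition scons {X : Type} (x : X) (f : nat -> X) (n : nat) : X :=
  match n with 0 => x | S m => f m end.

Definition uprn (r : nat -> nat) : nat -> nat := scons 0 (fun n => S (r n)).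

Fixpoint ren (r : nat -> nat) (t : tm) : tm :=
  match t with
  | var n => var (r n)
  | univ i => univ i
  | pi A B => pi (ren r A) (ren (uprn r) B)
  | app M N => app (ren r M) (ren r N)
  | lab l Ms => lab l (map (ren r) Ms)
  end.

Definition up (s : nat -> tm) : nat -> tm := scons (var 0) (fun n => ren S (s n)).

Fixpoint subst (s : nat -> tm) (t : tm) : tm :=
  match t with
  | var n => s n
  | univ i => univ i
  | pi A B => pi (subst s A) (subst (up s) B)
  | app M N => app (subst s M) (subst s N)
  | lab l Ms => lab l (map (subst s) Ms)
  end.

(* Single substitution  M[N/x]  for the most recent variable x (index 0). *)
Definition subst0 (N : tm) (M : tm) : tm := subst (scons N var) M.

(* Instantiation of a parameter telescope x_1,...,x_n by Ms = [M_1;...;M_n]: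
   in the context x_1..x_n, index 0 is x_n, index n-1 is x_1. *)
Definition inst (Ms : list tm) (j : nat) : tm :=
  if j <? length Ms then nth j (rev Ms) (var 0) else var (j - length Ms).

(* l({x1:A1,...,xn:An}, x:A |-> L : B) ;  lparams = [A1;...;An] (Ak lives in
   context x1..x_{k-1}), ldom = A (context x1..xn), lbody = L and lcod = B
   (context x1..xn,x). *)
Record lentry := mkLentry {
  lname : nat;
  lparams : list tm;
  ldom : tm;
  lbody : tm;
  lcod : tm }.

(* Label contexts: lists, head = most recently added entry. *)
Definition lctx := list lentry.

Definition lookup (D : lctx) (l : nat) : option lentry :=
  find (fun e => Nat.eqb (lname e) l) D.

Inductive step (D : lctx) : tm -> tm -> Prop :=
| st_beta l Ms N e : lookup D l = Some e ->
    step D (app (lab l Ms) N) (subst (scons N (inst Ms)) (lbody e))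
| st_pi1 A A' B : step D A A' -> step D (pi A B) (pi A' B)
| st_pi2 A B B' : step D B B' -> step D (pi A B) (pi A B')
| st_app1 M M' N : step D M M' -> step D (app M N) (app M' N)
| st_app2 M N N' : step D N N' -> step D (app M N) (app M N')
| st_lab l Ms Ms' : step_list D Ms Ms' -> step D (lab l Ms) (lab l Ms')
with step_list (D : lctx) : list tm -> list tm -> Prop :=
| sl_hd M M' Ms : step D M M' -> step_list D (M :: Ms) (M' :: Ms)
| sl_tl M Ms Ms' : step_list D Ms Ms' -> step_list D (M :: Ms) (M :: Ms').

Definition conv (D : lctx) : tm -> tm -> Prop := clos_refl_sym_trans tm (step D).

(* Type contexts: lists, head = most recent variable (index 0). *)
Inductive wf_lctx : lctx -> Prop :=
| wfl_nil : wf_lctx []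
| wfl_cons D e : wf_lctx D -> lookup D (lname e) = None ->
    has_type D (ldom e :: rev (lparams e)) (lbody e) (lcod e) ->
    wf_lctx (e :: D)
with wf_ctx : lctx -> list tm -> Prop :=
| wfc_nil D : wf_lctx D -> wf_ctx D []
| wfc_cons D G A i : wf_ctx D G -> has_type D G A (univ i) -> wf_ctx D (A :: G)
with has_type : lctx -> list tm -> tm -> tm -> Prop :=
| ty_var D G n A : wf_ctx D G -> nth_error G n = Some A ->
    has_type D G (var n) (ren (Nat.add (S n)) A)
| ty_univ D G i : wf_ctx D G -> has_type D G (univ i) (univ (S i))
| ty_pi D G A B i : has_type D G A (univ i) -> has_type D (A :: G) B (univ i) ->
    has_type D G (pi A B) (univ i)
| ty_app D G M N A B : has_type D G M (pi A B) -> has_type D G N A ->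
    has_type D G (app M N) (subst0 N B)
| ty_lab D G l Ms e : wf_ctx D G -> lookup D l = Some e ->
    length Ms = length (lparams e) ->
    (forall k, k < length Ms ->
       has_type D G (nth k Ms (var 0))
         (subst (inst (firstn k Ms)) (nth k (lparams e) (var 0)))) ->
    has_type D G (lab l Ms)
      (pi (subst (inst Ms) (ldom e)) (subst (up (inst Ms)) (lcod e)))
| ty_conv D G M A B i : has_type D G M A -> conv D A B ->
    has_type D G B (univ i) -> has_type D G M B.

Inductive ctm : Type :=
| cvar (n : nat)
| cuniv (i : nat)
| cpi (A B : ctm)
| capp (M N : ctm)
| clam (A M : ctm).

Fixpoint cren (r : nat -> nat) (t : ctm) : ctm :=
  match t with
  | cvar n => cvar (r n)
  | cuniv i => cuniv i
  | cpi A B => cpi (cren r A) (cren (uprn r) B)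
  | capp M N => capp (cren r M) (cren r N)
  | clam A M => clam (cren r A) (cren (uprn r) M)
  end.

Definition cup (s : nat -> ctm) : nat -> ctm := scons (cvar 0) (fun n => cren S (s n)).

Fixpoint csubst (s : nat -> ctm) (t : ctm) : ctm :=
  match t with
  | cvar n => s n
  | cuniv i => cuniv i
  | cpi A B => cpi (csubst s A) (csubst (cup s) B)
  | capp M N => capp (csubst s M) (csubst s N)
  | clam A M => clam (csubst s A) (csubst (cup s) M)
  end.

Definition csubst0 (N : ctm) (M : ctm) : ctm := csubst (scons N cvar) M.

Definition cinst (Ms : list ctm) (j : nat) : ctm :=
  if j <? length Ms then nth j (rev Ms) (cvar 0) else cvar (j - length Ms).

(* A table of already-translated label entries: (name, A°, L°). *)
Definition btable := list (nat * (ctm * ctm)).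

Definition blookup (T : btable) (l : nat) : option (ctm * ctm) :=
  match find (fun p => Nat.eqb (fst p) l) T with
  | Some p => Some (snd p)
  | None => None
  end.

Fixpoint back_with (T : btable) (t : tm) : ctm :=
  match t with
  | var n => cvar n
  | univ i => cuniv i
  | pi A B => cpi (back_with T A) (back_with T B)
  | app M N => capp (back_with T M) (back_with T N)
  | lab l Ms =>
      match blookup T l with
      | Some (Ac, Lc) =>
          let s := cinst (map (back_with T) Ms) in
          clam (csubst s Ac) (csubst (cup s) Lc)
      | None => cvar 0 (* unreachable on well-typed terms *)
      end
  end.

Fixpoint trans_lctx (D : lctx) : btable :=
  match D with
  | [] => []
  | e :: D' =>
      let T := trans_lctx D' in
      (lname e, (back_with T (ldom e), back_with T (lbody e))) :: T
  end.

Definition back (D : lctx) (t : tm) : ctm := back_with (trans_lctx D) t.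

From Pilot Require Import Defs.
From Stdlib Require Import List Arith Lia.
Import ListNotations.

(* The translation is a homomorphism on every constructor except labels, where
   l{Ms} becomes the translated entry (A°, L°) instantiated by the translated
   arguments.  A substitution for the free variables of l{Ms} passes through
   that instantiation as soon as A° and L° mention only the parameters of the
   label (and, for L°, the bound variable x).  Typing guarantees this: label
   entries are typed in their parameter contexts, and the translation of a term
   typed in a context of length n has no free index >= n. *)

Lemma cren_ext t : forall r r', (forall x, r x = r' x) -> cren r t = cren r' t.
Proof.
  induction t; intros r r' H; simpl; f_equal; auto;
    apply IHt2; intros [|x]; simpl; auto.
Qed.

Lemma cren_comp t : forall r1 r2, cren r1 (cren r2 t) = cren (fun x => r1 (r2 x)) t.
Proof.
  induction t; intros r1 r2; simpl; f_equal; auto;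
    rewrite IHt2; apply cren_ext; intros [|x]; reflexivity.
Qed.

Lemma csubst_ext t : forall s s', (forall x, s x = s' x) -> csubst s t = csubst s' t.
Proof.
  induction t; intros s s' H; simpl; f_equal; auto;
    apply IHt2; intros [|x]; simpl; auto; rewrite H; reflexivity.
Qed.

Lemma cren_as_csubst t : forall r, cren r t = csubst (fun x => cvar (r x)) t.
Proof.
  induction t; intros r; simpl; f_equal; auto;
    rewrite IHt2; apply csubst_ext; intros [|x]; reflexivity.
Qed.

Lemma csubst_cren t : forall s r, csubst s (cren r t) = csubst (fun x => s (r x)) t.
Proof.
  induction t; intros s r; simpl; f_equal; auto;
    rewrite IHt2; apply csubst_ext; intros [|x]; reflexivity.
Qed.

Lemma cren_csubst t : forall r s, cren r (csubst s t) = csubst (fun x => cren r (s x)) t.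
Proof.
  induction t; intros r s; simpl; f_equal; auto;
    rewrite IHt2; apply csubst_ext; intros [|x]; simpl; auto;
    rewrite !cren_comp; apply cren_ext; reflexivity.
Qed.

Lemma csubst_comp t : forall s' s,
  csubst s' (csubst s t) = csubst (fun x => csubst s' (s x)) t.
Proof.
  induction t; intros s' s; simpl; f_equal; auto;
    rewrite IHt2; apply csubst_ext; intros [|x]; simpl; auto;
    rewrite csubst_cren, cren_csubst; apply csubst_ext; reflexivity.
Qed.

Fixpoint cclosed (k : nat) (t : ctm) : Prop :=
  match t with
  | cvar n => n < k
  | cuniv _ => True
  | cpi A B => cclosed k A /\ cclosed (S k) B
  | capp M N => cclosed k M /\ cclosed k N
  | clam A M => cclosed k A /\ cclosed (S k) M
  end.

Lemma cclosed_cren t : forall k k' r, cclosed k t -> (forall x, x < k -> r x < k') ->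
  cclosed k' (cren r t).
Proof.
  induction t; intros k k' r Ht Hr; simpl in *; try destruct Ht; try split; eauto;
    apply IHt2 with (S k); auto; intros [|x] Hx; simpl; try lia;
    enough (r x < k') by lia; apply Hr; lia.
Qed.

Lemma cclosed_cup k k' s : (forall x, x < k -> cclosed k' (s x)) ->
  forall x, x < S k -> cclosed (S k') (cup s x).
Proof.
  intros Hs [|x] Hx; simpl; [lia|].
  eapply cclosed_cren; [apply Hs; lia | intros; lia].
Qed.

Lemma cclosed_csubst t : forall k k' s, cclosed k t ->
  (forall x, x < k -> cclosed k' (s x)) -> cclosed k' (csubst s t).
Proof.
  induction t; intros k k' s Ht Hs; simpl in *; try destruct Ht; try split; eauto;
    eapply IHt2; eauto using cclosed_cup.
Qed.

Lemma csubst_ext_cclosed t : forall k s s', cclosed k t ->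
  (forall x, x < k -> s x = s' x) -> csubst s t = csubst s' t.
Proof.
  induction t; intros k s s' Ht H; simpl in *; try destruct Ht; f_equal; eauto;
    apply IHt2 with (S k); auto; intros [|x] Hx; simpl; auto; rewrite H by lia;
    reflexivity.
Qed.

Lemma cup_csubst_comp k (s s' tau : nat -> ctm) :
  (forall x, x < k -> s' x = csubst tau (s x)) ->
  forall x, x < S k -> cup s' x = csubst (cup tau) (cup s x).
Proof.
  intros H [|x] Hx; simpl; auto.
  rewrite H by lia. rewrite csubst_cren, cren_csubst. apply csubst_ext; reflexivity.
Qed.

Lemma cinst_map_csubst tau l x : x < length l ->
  cinst (map (csubst tau) l) x = csubst tau (cinst l x).
Proof.
  intros Hx. unfold cinst. rewrite length_map.
  replace (x <? length l) with true by (symmetry; apply Nat.ltb_lt; exact Hx).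
  rewrite <- map_rev, nth_indep with (d' := csubst tau (cvar 0))
    by (rewrite length_map, length_rev; exact Hx).
  apply map_nth.
Qed.

Lemma cclosed_cinst k l : Forall (cclosed k) l ->
  forall x, x < length l -> cclosed k (cinst l x).
Proof.
  intros Hl x Hx. unfold cinst.
  replace (x <? length l) with true by (symmetry; apply Nat.ltb_lt; exact Hx).
  rewrite Forall_forall in Hl. apply Hl, in_rev, nth_In. rewrite length_rev; exact Hx.
Qed.

Lemma csubst_clam_cinst tau l A L :
  cclosed (length l) A -> cclosed (S (length l)) L ->
  csubst tau (clam (csubst (cinst l) A) (csubst (cup (cinst l)) L)) =
  clam (csubst (cinst (map (csubst tau) l)) A)
       (csubst (cup (cinst (map (csubst tau) l))) L).
Proof.
  intros HA HL. simpl. rewrite !csubst_comp. f_equal.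
  - eapply csubst_ext_cclosed; [eassumption|].
    intros; symmetry; apply cinst_map_csubst; assumption.
  - eapply csubst_ext_cclosed; [eassumption|].
    intros x Hx. symmetry. apply (cup_csubst_comp (length l)); [|assumption].
    intros; apply cinst_map_csubst; assumption.
Qed.

Definition tm_nested_ind (P : tm -> Prop)
  (Hvar : forall n, P (var n)) (Huniv : forall i, P (univ i))
  (Hpi : forall A B, P A -> P B -> P (pi A B))
  (Happ : forall M N, P M -> P N -> P (Defs.app M N))
  (Hlab : forall l Ms, Forall P Ms -> P (lab l Ms)) : forall t, P t :=
  fix F t := match t with
  | var n => Hvar n
  | univ i => Huniv i
  | pi A B => Hpi A B (F A) (F B)
  | Defs.app M N => Happ M N (F M) (F N)
  | lab l Ms => Hlab l Ms ((fix G (Ms : list tm) : Forall P Ms :=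
       match Ms with
       | [] => Forall_nil _
       | M :: Ms' => Forall_cons _ (F M) (G Ms')
       end) Ms)
  end.

Inductive labels_closed (T : btable) : tm -> Prop :=
| lc_var n : labels_closed T (var n)
| lc_univ i : labels_closed T (univ i)
| lc_pi A B : labels_closed T A -> labels_closed T B -> labels_closed T (pi A B)
| lc_app M N : labels_closed T M -> labels_closed T N -> labels_closed T (Defs.app M N)
| lc_lab l Ms A L : blookup T l = Some (A, L) ->
    cclosed (length Ms) A -> cclosed (S (length Ms)) L ->
    Forall (labels_closed T) Ms -> labels_closed T (lab l Ms).

Lemma labels_closed_ren T t : labels_closed T t -> forall r, labels_closed T (ren r t).
Proof.
  induction t as [| | | |l Ms IHMs] using tm_nested_ind; intros Ht r;
    inversion_clear Ht as [| | | |? ? A L Hl HA HL HMs]; simpl; eauto using labels_closed.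
  apply lc_lab with A L; rewrite ?length_map; auto.
  apply Forall_map. eapply Forall_impl; [|exact (Forall_and IHMs HMs)].
  intros M [IHM HM]. auto.
Qed.

Lemma back_with_lab T l Ms Ms' A L tau :
  blookup T l = Some (A, L) -> cclosed (length Ms) A -> cclosed (S (length Ms)) L ->
  map (back_with T) Ms' = map (csubst tau) (map (back_with T) Ms) ->
  back_with T (lab l Ms') = csubst tau (back_with T (lab l Ms)).
Proof.
  intros Hl HA HL HMs. simpl. rewrite Hl, HMs, csubst_clam_cinst; [reflexivity| |];
    rewrite length_map; assumption.
Qed.

Lemma back_with_ren T t : labels_closed T t -> forall r,
  back_with T (ren r t) = cren r (back_with T t).
Proof.
  induction t as [| |A B IHA IHB|M N IHM IHN|l Ms IHMs] using tm_nested_ind;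
    intros Ht r; inversion_clear Ht as [| |? ? HA HB|? ? HM HN|? ? Ac Lc Hl HAc HLc HMs].
  - reflexivity.
  - reflexivity.
  - simpl. rewrite IHA, IHB by assumption. reflexivity.
  - simpl. rewrite IHM, IHN by assumption. reflexivity.
  - rewrite cren_as_csubst. apply back_with_lab with Ac Lc; auto.
    rewrite !map_map. apply map_ext_in. intros M HinMs.
    rewrite Forall_forall in IHMs, HMs. rewrite IHMs, cren_as_csubst by auto.
    reflexivity.
Qed.

Lemma back_with_subst T t : labels_closed T t ->
  forall s, (forall n, labels_closed T (s n)) ->
  back_with T (subst s t) = csubst (fun n => back_with T (s n)) (back_with T t).
Proof.
  induction t as [| |A B IHA IHB|M N IHM IHN|l Ms IHMs] using tm_nested_ind;
    intros Ht s Hs; inversion_clear Ht as [| |? ? HA HB|? ? HM HN|? ? Ac Lc Hl HAc HLc HMs].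
  - reflexivity.
  - reflexivity.
  - simpl. rewrite IHA, IHB by (auto; intros [|n]; simpl; auto using lc_var,
      labels_closed_ren).
    f_equal. apply csubst_ext. intros [|n]; simpl; [reflexivity|].
    apply back_with_ren, Hs.
  - simpl. rewrite IHM, IHN by assumption. reflexivity.
  - apply back_with_lab with Ac Lc; auto.
    rewrite !map_map. apply map_ext_in. intros M HinMs.
    rewrite Forall_forall in IHMs, HMs. apply IHMs; auto.
Qed.

Definition table_closed (D : lctx) (T : btable) : Prop :=
  forall l e, lookup D l = Some e -> exists A L, blookup T l = Some (A, L) /\
    cclosed (length (lparams e)) A /\ cclosed (S (length (lparams e))) L.

Lemma Forall_of_nth {X : Type} (P : X -> Prop) (l : list X) (d : X) :
  (forall k, k < length l -> P (nth k l d)) -> Forall P l.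
Proof.
  intros H. apply Forall_forall. intros x Hx.
  destruct (In_nth _ _ d Hx) as [k [Hk <-]]. auto.
Qed.

Lemma has_type_labels_closed D T G t A : has_type D G t A -> table_closed D T ->
  labels_closed T t.
Proof.
  intros Ht HT.
  induction Ht as [| | | |D G l Ms e _ He Hlen _ IHMs|]; eauto using labels_closed.
  destruct (HT _ _ He) as [Ac [Lc [Hl [HAc HLc]]]].
  apply lc_lab with Ac Lc; rewrite ?Hlen; auto.
  apply Forall_of_nth with (var 0). auto.
Qed.

Lemma has_type_cclosed D T G t A : has_type D G t A -> table_closed D T ->
  cclosed (length G) (back_with T t).
Proof.
  intros Ht HT.
  induction Ht as [D G n A _ Hn| | | |D G l Ms e _ He Hlen _ IHMs|]; simpl; auto.
  - apply nth_error_Some. congruence.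
  - destruct (HT _ _ He) as [Ac [Lc [Hl [HAc HLc]]]]. rewrite Hl.
    assert (Hinst : forall x, x < length Ms ->
              cclosed (length G) (cinst (map (back_with T) Ms) x)).
    { intros x Hx. apply cclosed_cinst; [|rewrite length_map; exact Hx].
      apply Forall_map, Forall_of_nth with (var 0). auto. }
    rewrite <- Hlen in HAc, HLc. split.
    + apply cclosed_csubst with (length Ms); assumption.
    + apply cclosed_csubst with (S (length Ms)); [assumption|].
      apply cclosed_cup, Hinst.
Qed.

Lemma has_type_wf_ctx D G t A : has_type D G t A -> wf_ctx D G.
Proof. induction 1; auto. Qed.

Lemma wf_ctx_wf_lctx D G : wf_ctx D G -> wf_lctx D.
Proof. induction 1; auto. Qed.

Lemma wf_lctx_table_closed D : wf_lctx D -> table_closed D (trans_lctx D).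
Proof.
  induction 1 as [|D e _ IHD _ Hbody]; intros l e' Hl; [discriminate|].
  simpl in Hl. unfold blookup; simpl.
  destruct (Nat.eqb (lname e) l); [|exact (IHD _ _ Hl)].
  injection Hl as <-. do 2 eexists; split; [reflexivity|].
  pose proof (has_type_wf_ctx _ _ _ _ Hbody) as Hwf.
  inversion Hwf as [|? ? ? ? _ Hdom].
  pose proof (has_type_cclosed _ _ _ _ _ Hdom IHD) as HA.
  pose proof (has_type_cclosed _ _ _ _ _ Hbody IHD) as HL.
  simpl in HL. rewrite length_rev in HA, HL. auto.
Qed.

Theorem lemma3p19 (D : lctx) (G : list tm) (M B N A : tm) :
  has_type D (A :: G) M B ->
  has_type D G N A ->
  back D (subst0 N M) = csubst0 (back D N) (back D M).
Proof.
  intros HM HN. unfold back, subst0, csubst0.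
  pose proof (wf_lctx_table_closed D
    (wf_ctx_wf_lctx _ _ (has_type_wf_ctx _ _ _ _ HN))) as HT.
  rewrite back_with_subst.
  - apply csubst_ext. intros [|n]; reflexivity.
  - exact (has_type_labels_closed _ _ _ _ _ HM HT).
  - intros [|n]; [exact (has_type_labels_closed _ _ _ _ _ HN HT) | apply lc_var].
Qed.
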